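(* Let $A_1,\ldots,A_n$ be events in a probability space, let $X$ be the number of these events that occur, and let $S_{k+1}=\sum_{1\le i_1<\cdots<i_{k+1}\le n}P(A_{i_1}\cdots A_{i_{k+1}})$. For integers $i,k$ with $1\le i\le k$ and $k+1\le n$, $$E\left[\binom{X-i}{k+1-i}\right]\ge\frac{\binom{k+1}{i}}{\binom{n}{i}}S_{k+1}.$$
   Context: Binomial convention: for integers $s,t$, $\binom{t}{s}=0$ if $\min(s,t)<0$ or $s>t$; otherwise $\binom{t}{s}=\frac{t!}{s!(t-s)!}$. $A_{i_1}\cdots A_{i_j}$ denotes the intersection of the events. *)

From HB Require Import structures.
From mathcomp Require Import all_boot all_order all_algebra.
From mathcomp Require Import all_classical all_reals all_analysis.
Set Implicit Arguments. Unset Strict Implicit. Unset Printing Implicit Defensive.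
Import Order.TTheory GRing.Theory Num.Theory.

(* Binomial coefficient on integers with the paper's convention:
   binomZ t s = 0 if min(s,t) < 0 or s > t, else t!/(s!(t-s)!). *)
Definition binomZ (t s : int) : nat :=
  if ((s < 0) || (t < 0))%R then 0%N else 'C(`|t|%N, `|s|%N).

Definition num_occ {T : Type} {n : nat} (A : 'I_n -> set T) (w : T) : nat :=
  #|[set j : 'I_n | `[< A j w >]]|.

Definition Ssum {d : measure_display} {T : measurableType d} {R : realType}
  (P : probability T R) {n : nat} (A : 'I_n -> set T) (m : nat) : \bar R :=
  (\sum_(I : {set 'I_n} | #|I| == m) P (\bigcap_(j in [set j | j \in I]) A j)%classic)%E.

From HB Require Import structures.
From mathcomp Require Import all_boot all_order all_algebra.
From mathcomp Require Import all_classical all_reals all_analysis.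
From mathcomp Require Import measurable_realfun.
From mathcomp Require Import zify.
Import Order.TTheory GRing.Theory Num.Theory.
Local Open Scope ring_scope.

(* Summing the indicators of all m-fold intersections at w counts the m-subsets
   of the events occurring at w, so S_m = E[C(X, m)].  The bound then holds
   pointwise: counting the i-subsets of m-subsets of the X occurring events,
   C(m, i) C(X, m) = C(X, i) C(X - i, m - i) <= C(n, i) C(X - i, m - i). *)

Lemma mul_bin_bin (X m i : nat) : (i <= m <= X)%N ->
  ('C(X, m) * 'C(m, i) = 'C(X, i) * 'C(X - i, m - i))%N.
Proof.
case/andP => him hmX; have hiX := leq_trans him hmX.
have hf : (0 < i`! * (m - i)`! * (X - m)`!)%N by rewrite !muln_gt0 !fact_gt0.
apply/eqP; rewrite -(eqn_pmul2r hf); apply/eqP.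
have -> : ('C(X, m) * 'C(m, i) * (i`! * (m - i)`! * (X - m)`!) = X`!)%N.
  by rewrite -(bin_fact hmX) -(bin_fact him); lia.
have hmi : (m - i <= X - i)%N by lia.
rewrite -(bin_fact hiX) -(bin_fact hmi).
have -> : (X - i - (m - i) = X - m)%N by lia.
lia.
Qed.

Lemma binomZ_subn (X m i : nat) : (i <= X)%N -> (i <= m)%N ->
  binomZ (X%:Z - i%:Z) (m%:Z - i%:Z) = 'C(X - i, m - i).
Proof. by move=> hiX him; rewrite !subzn. Qed.

Lemma bin_ratio_mul_le (R : numFieldType) (X n m i : nat) :
  (i <= m)%N -> (m <= n)%N -> (X <= n)%N ->
  ('C(m, i)%:R / 'C(n, i)%:R : R) * 'C(X, m)%:R
    <= (binomZ (X%:Z - i%:Z) (m%:Z - i%:Z))%:R.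
Proof.
move=> him hmn hXn.
have [hXm|hmX] := ltnP X m; first by rewrite (bin_small hXm) mulr0n mulr0 ler0n.
have hiX := leq_trans him hmX.
have Cni_gt0 : (0 : R) < 'C(n, i)%:R by rewrite ltr0n bin_gt0 (leq_trans him).
rewrite binomZ_subn // mulrAC ler_pdivrMr // -!natrM ler_nat.
by rewrite mulnC mul_bin_bin ?him // mulnC leq_mul2l leq_bin2l ?orbT.
Qed.

Section occurrence_count.
Variables (T : Type) (n : nat) (A : 'I_n -> set T).

Lemma indic_bigcap_subset (R : pzRingType) (I : {set 'I_n}) (w : T) :
  \1_(\bigcap_(j in [set j | j \in I]) A j)%classic w
    = (I \subset [set j | `[< A j w >]])%:R :> R.
Proof.
rewrite indicE; congr (nat_of_bool _ )%:R; apply/idP/fintype.subsetP.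
- by rewrite in_setE => AIw j jI; rewrite inE; apply/asboolP/AIw.
- by move=> sIA; rewrite in_setE => j /sIA; rewrite inE => /asboolP.
Qed.

Lemma sum_indic_bigcap_card (R : pzRingType) (m : nat) (w : T) :
  \sum_(I : {set 'I_n} | #|I| == m)
     \1_(\bigcap_(j in [set j | j \in I]) A j)%classic w
    = 'C(num_occ A w, m)%:R :> R.
Proof.
under eq_bigr do rewrite indic_bigcap_subset.
rewrite -natr_sum -cards_draws -sum1dep_card big_mkcondl /=.
by congr _%:R; apply: eq_bigr => I _; case: (I \subset _).
Qed.

Lemma num_occ_le (w : T) : (num_occ A w <= n)%N.
Proof. by rewrite -[leqRHS]card_ord max_card. Qed.

End occurrence_count.

Section expected_binomial_occurrences.
Local Open Scope ereal_scope.
Variables (d : measure_display) (T : measurableType d) (R : realType).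
Variables (P : probability T R) (n : nat) (A : 'I_n -> set T).
Hypothesis mA : forall j, measurable (A j).

Let B (I : {set 'I_n}) : set T := (\bigcap_(j in [set j | j \in I]) A j)%classic.

Let measurable_B (I : {set 'I_n}) : measurable (B I).
Proof. by apply: fin_bigcap_measurable => [|j _]; [exact: finite_finset | exact: mA]. Qed.

Let measurable_indic_B (I : {set 'I_n}) :
  measurable_fun setT (fun w => (\1_(B I) w : R)%:E).
Proof. exact/measurable_EFinP/measurable_indic. Qed.

Let bin_num_occE (m : nat) (w : T) :
  ('C(num_occ A w, m)%:R : R)%:E = \sum_(I : {set 'I_n} | #|I| == m) (\1_(B I) w)%:E.
Proof. by rewrite sumEFin sum_indic_bigcap_card. Qed.

Lemma measurable_bin_num_occ (m : nat) :
  measurable_fun setT (fun w => ('C(num_occ A w, m)%:R : R)%:E).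
Proof.
rewrite (funext (bin_num_occE m)) /=.
by under eq_fun do rewrite -big_filter; exact: emeasurable_sum.
Qed.

Lemma Ssum_expect_bin (m : nat) :
  Ssum P A m = \int[P]_(w in setT) ('C(num_occ A w, m)%:R : R)%:E.
Proof.
under eq_integral do rewrite bin_num_occE -big_filter.
rewrite ge0_integral_sum // big_filter; apply: eq_bigr => I _.
by rewrite integral_indic ?setIT.
Qed.

End expected_binomial_occurrences.

(* No measurability is needed: the integral of a nonnegative function is the
   supremum of the integrals of the simple functions below it. *)
Lemma ge0_le_integralT (d : measure_display) (T : measurableType d) (R : realType)
  (mu : {measure set T -> \bar R}) (f g : T -> \bar R) :
  (forall x, (0 <= f x)%E) -> (forall x, (f x <= g x)%E) ->
  (\int[mu]_(x in setT) f x <= \int[mu]_(x in setT) g x)%E.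
Proof.
move=> f0 fg; have g0 x : (0 <= g x)%E := le_trans (f0 x) (fg x).
rewrite !ge0_integralTE //; apply/ge_ereal_sup => _ [h hf <-].
by apply: ereal_sup_ubound; exists h => // x; exact: le_trans (hf x) (fg x).
Qed.

Theorem lemma3 (d : measure_display) (T : measurableType d) (R : realType)
  (P : probability T R) (n : nat) (A : 'I_n -> set T)
  (mA : forall j, measurable (A j)) (i k : nat)
  (hi1 : (1 <= i)%N) (hik : (i <= k)%N) (hkn : (k + 1 <= n)%N) :
  (\int[P]_(w in setT)
      ((binomZ ((num_occ A w)%:Z - i%:Z) ((k + 1)%:Z - i%:Z))%:R : R)%:E
   >= ('C(k + 1, i)%:R / 'C(n, i)%:R : R)%:E * Ssum P A (k + 1))%E.
Proof.
have him : (i <= k + 1)%N by rewrite addn1 ltnW.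
rewrite Ssum_expect_bin // -ge0_integralZl_EFin ?divr_ge0 //;
  last exact: measurable_bin_num_occ.
apply: ge0_le_integralT => w.
  by rewrite -EFinM lee_fin mulr_ge0 ?divr_ge0.
by rewrite -EFinM lee_fin bin_ratio_mul_le ?num_occ_le.
Qed.
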